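(* Let $L_1',L_2'\subseteq\mathcal{P}$ be simple event logs, $bk\in\mathcal{A}^*$, $n\in\mathbb{N}_{\ge1}$, $M_1=ms^{L_1',n}(bk)$ and $M_2=ms^{L_2',n}(bk)$. Let $CG(M_1,M_2)$ be the set of pairs $(g_1',g_2')$ where $g_1'$ is a group of $M_1$, $g_2'$ is a group of $M_2$, and $g_1'\overset{n}{\sim}g_2'$, and set $F(M_1,M_2)=\sum_{(g_1',g_2')\in CG(M_1,M_2)}\big(|g_1'|-\min(|g_1'|,|g_2'|)\big)$. Then for every linker $f$ (w.r.t. $n$) from $L_1'$ to $L_2'$, at least $F(M_1,M_2)$ elements $p_1'\in M_1$ satisfy $f(p_1')\notin M_2$; more precisely, for each $(g_1',g_2')\in CG(M_1,M_2)$, at least $|g_1'|-\min(|g_1'|,|g_2'|)$ elements of $g_1'$ are not mapped by $f$ into $M_2$.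
   Context: $\mathcal{P}=\mathcal{C}\times\mathcal{A}^*\times\mathcal{S}$ is the set of simple process instances $p=(c,\sigma,s)$ (case id, sequence of activities, sensitive value) with projections $\pi_c,\pi_\sigma,\pi_s$; a simple event log is a finite $L\subseteq\mathcal{P}$ in which elements with equal case ids are equal. $\sqsubseteq$ is the (not necessarily contiguous) subsequence relation; $pref(\langle a_1,\dots,a_m\rangle)=\{\langle a_1,\dots,a_k\rangle\mid 1\le k\le m\}$; $LCS(\sigma_1,\sigma_2)$ is the set of longest common subsequences, $LCS^{\sigma_1}_{\sigma_2}$ their length, and $SCS^{\sigma_1}_{\sigma_2}$ the length of a shortest common super-sequence. Specialization: $p'\preceq_n p$ iff $\pi_\sigma(p')\sqsubseteq\pi_\sigma(p)$, $|\pi_\sigma(p)|\le|\pi_\sigma(p')|+n$, and $\pi_s(p)=\pi_s(p')$. Matching set: $ms^{L',n}(bk)=\{p'\in L'\mid \exists p\in\mathcal{P}: p'\preceq_n p \wedge bk\sqsubseteq\pi_\sigma(p)\}$. A group of a matching set $M$ is a nonempty set of the form $\{p\in M\mid \pi_s(p)=v\}$ for some $v\in\mathcal{S}$. Linker: a total injective function $f:L_1'\to L_2'$ such that for every $p_1'\in L_1'$ there exist $p_1,p_2\in\mathcal{P}$ with $p_1'\preceq_n p_1$, $f(p_1')\preceq_n p_2$, $\pi_s(p_1)=\pi_s(p_2)$, and $\pi_\sigma(p_1)\in pref(\pi_\sigma(p_2))$. Comparable sequences: $\sigma_1\overset{n}{\sim}\sigma_2$ iff $n\ge|\sigma_1|-LCS^{\sigma_1}_{\sigma_2}$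 in case some $\sigma\in LCS(\sigma_1,\sigma_2)$ lies in $pref(\sigma_2)$, and $n\ge SCS^{\sigma_1}_{\sigma_2}-\min(|\sigma_1|,|\sigma_2|)$ otherwise. Comparable process instances: $p_1\overset{n}{\sim}p_2$ iff $\pi_s(p_1)=\pi_s(p_2)$ and $\pi_\sigma(p_1)\overset{n}{\sim}\pi_\sigma(p_2)$. Comparable groups: $g_1'\overset{n}{\sim}g_2'$ iff $p_1'\overset{n}{\sim}p_2'$ for all $p_1'\in g_1'$, $p_2'\in g_2'$. *)

From HB Require Import structures.
From mathcomp Require Import all_boot.
From mathcomp Require Import finmap.
From mathcomp Require Import boolp.

Set Implicit Arguments.
Unset Strict Implicit.
Unset Printing Implicit Defensive.

Local Open Scope fset_scope.

Section Defs.
(* C: case ids, A: activities, S: sensitive values *)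
Variables (C A S : choiceType).

Definition proc := ((C * seq A) * S)%type.
Definition pc (p : proc) : C := p.1.1.
Definition psig (p : proc) : seq A := p.1.2.
Definition ps (p : proc) : S := p.2.

Definition simple_log (L : {fset proc}) : Prop :=
  {in L &, forall p q, pc p = pc q -> p = q}.

Definition in_pref (s t : seq A) : bool := prefix s t && (0 < size s).

Definition lcs_pred (s1 s2 : seq A) : pred nat :=
  fun k => `[< exists s, [/\ subseq s s1, subseq s s2 & size s = k] >].

Lemma lcs_ex (s1 s2 : seq A) : exists k, lcs_pred s1 s2 k.
Proof. by exists 0; apply/asboolP; exists [::]; rewrite !sub0seq. Qed.

Lemma lcs_bnd (s1 s2 : seq A) : forall k, lcs_pred s1 s2 k -> k <= size s1.
Proof. by move=> k /asboolP [s [h1 _ <-]]; apply: size_subseq. Qed.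

Definition lcs_len (s1 s2 : seq A) : nat := ex_maxn (lcs_ex s1 s2) (@lcs_bnd s1 s2).

Definition is_lcs (s1 s2 s : seq A) : bool :=
  [&& subseq s s1, subseq s s2 & size s == lcs_len s1 s2].

Definition scs_pred (s1 s2 : seq A) : pred nat :=
  fun k => `[< exists s, [/\ subseq s1 s, subseq s2 s & size s = k] >].

Lemma scs_ex (s1 s2 : seq A) : exists k, scs_pred s1 s2 k.
Proof.
exists (size (s1 ++ s2)); apply/asboolP; exists (s1 ++ s2); split => //.
- by rewrite -{1}(cats0 s1) cat_subseq ?sub0seq.
- by rewrite -{1}(cat0s s2) cat_subseq ?sub0seq.
Qed.

Definition scs_len (s1 s2 : seq A) : nat := ex_minn (scs_ex s1 s2).

Definition comparable_seq (n : nat) (s1 s2 : seq A) : Prop :=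
  if `[< exists s, is_lcs s1 s2 s /\ in_pref s s2 >]
  then size s1 - lcs_len s1 s2 <= n
  else scs_len s1 s2 - minn (size s1) (size s2) <= n.

Definition comparable_proc (n : nat) (p1 p2 : proc) : Prop :=
  ps p1 = ps p2 /\ comparable_seq n (psig p1) (psig p2).

Definition comparable_group (n : nat) (g1 g2 : {fset proc}) : Prop :=
  {in g1 & g2, forall p1 p2, comparable_proc n p1 p2}.

Definition spec (n : nat) (p' p : proc) : Prop :=
  [/\ subseq (psig p') (psig p), size (psig p) <= size (psig p') + n
    & ps p = ps p'].

Definition ms (L : {fset proc}) (n : nat) (bk : seq A) : {fset proc} :=
  [fset p' in L | `[< exists p : proc, spec n p' p /\ subseq bk (psig p) >]].

Definition groups (M : {fset proc}) : {fset {fset proc}} :=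
  [fset [fset p in M | ps p == v] | v in [fset ps p | p in M]].

Definition CG (n : nat) (M1 M2 : {fset proc}) : {fset ({fset proc} * {fset proc})} :=
  [fset x in groups M1 `*` groups M2 | `[< comparable_group n x.1 x.2 >]].

Definition Fbound (n : nat) (M1 M2 : {fset proc}) : nat :=
  \sum_(x <- CG n M1 M2) (#|` x.1| - minn #|` x.1| #|` x.2|).

Definition linker (n : nat) (L1 L2 : {fset proc}) (f : proc -> proc) : Prop :=
  [/\ {in L1, forall p, f p \in L2},
      {in L1 &, injective f}
    & {in L1, forall p1', exists p1 p2 : proc,
         [/\ spec n p1' p1, spec n (f p1') p2, ps p1 = ps p2
           & in_pref (psig p1) (psig p2)]}].

End Defs.

From HB Require Import structures.
From mathcomp Require Import all_boot.
From mathcomp Require Import finmap.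
From mathcomp Require Import boolp.
From mathcomp Require Import zify.

Set Implicit Arguments.
Unset Strict Implicit.
Unset Printing Implicit Defensive.
Local Open Scope fset_scope.

(* A linker [f] preserves sensitive values, because the
   specializations in its definition do.  A comparable pair (g1, g2) of
   CG(M1, M2) consists of the groups of one and the same sensitive value v
   in M1 and in M2, and is therefore determined by any element of g1.
   - Per pair: the elements of g1 that [f] maps into M2 are mapped, injectively,
     into the group of v in M2, i.e. into g2; so at most |g2| of them are
     "kept", and at least |g1| - min(|g1|, |g2|) are lost.
   - Globally: the first components of the pairs of CG(M1, M2) are pairwise
     disjoint subsets of M1, so the per-pair losses add up to at most the
     number of elements of M1 lost by [f]. *)

Section Counting.
Variable T : choiceType.
Implicit Types (A B : {fset T}).

Lemma card_sepC A (P : pred T) :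
  (#|` [fset p in A | P p]| + #|` [fset p in A | ~~ P p]| = #|` A|)%N.
Proof.
rewrite -[RHS](cardfsID [fset p in A | P p]).
have -> : A `&` [fset p in A | P p] = [fset p in A | P p].
  by apply/fsetP => p; rewrite !inE; case: (p \in A).
have -> // : A `\` [fset p in A | P p] = [fset p in A | ~~ P p].
by apply/fsetP => p; rewrite !inE; case: (p \in A); case: (P p).
Qed.

Lemma loss_bound (T' : choiceType) A (B M : {fset T'}) (f : T -> T') :
  {in A &, injective f} -> {in A, forall p, f p \in M -> f p \in B} ->
  #|` A| - minn #|` A| #|` B| <= #|` [fset p in A | f p \notin M]|.
Proof.
move=> f_inj f_to_B.
set kept := [fset p in A | f p \in M].
have kept_le_B : #|` kept| <= #|` B|.
  have <- : #|` f @` kept| = #|` kept|.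
    apply/eqP/card_in_imfsetP => p q; rewrite !inE => /andP[Ap _] /andP[Aq _].
    exact: f_inj.
  apply: fsubset_leq_card; apply/fsubsetP => y /imfsetP[p /=].
  by rewrite !inE => /andP[Ap fpM] ->; apply: f_to_B.
have := card_sepC A (fun p => f p \in M); rewrite -/kept; lia.
Qed.

Lemma count_le1 (I : eqType) (s : seq I) (P : pred I) :
  uniq s -> {in s &, forall i j, P i -> P j -> i = j} -> count P s <= 1.
Proof.
move=> s_uniq P_unique; rewrite -size_filter.
case E: (filter P s) => [//|i0 s'].
have [i0s Pi0] : i0 \in s /\ P i0.
  by have := mem_head i0 s'; rewrite -E mem_filter => /andP[].
apply: (@uniq_leq_size _ _ [:: i0]); first by rewrite -E filter_uniq.
move=> j; rewrite -E mem_filter inE => /andP[Pj js].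
by apply/eqP; apply: P_unique.
Qed.

Lemma sum_card_disjoint (I : choiceType) (X : {fset I}) (F : I -> {fset T}) B :
  {in X &, forall i j p, p \in F i -> p \in F j -> i = j} ->
  \sum_(i <- X) #|` [fset p in B | p \in F i]| <= #|` B|.
Proof.
move=> F_disj.
have -> : \sum_(i <- X) #|` [fset p in B | p \in F i]| =
           \sum_(i <- X) \sum_(p <- B | p \in F i) 1.
  by apply: eq_bigr => i _; rewrite card_fset_sum1 [RHS]big_fset_condE.
under eq_bigr do rewrite big_mkcond.
rewrite exchange_big /= card_fset_sum1; apply: leq_sum => p _.
rewrite -big_mkcondr sum1_count.
by apply: count_le1 => [|i j iX jX]; [exact: fset_uniq | exact: F_disj].
Qed.

End Counting.

Section MatchingSets.
Variables (C A S : choiceType).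
Implicit Types (L M : {fset proc C A S}) (p : proc C A S).

Lemma linker_ps n L1 L2 f : linker n L1 L2 f -> {in L1, forall p, ps (f p) = ps p}.
Proof.
by case=> _ _ f_spec p /f_spec[p1 [p2 [[_ _ e1] [_ _ e2] e _]]]; rewrite -e2 -e e1.
Qed.

Lemma ms_sub L n bk p : p \in ms L n bk -> p \in L.
Proof. by rewrite !inE => /andP[]. Qed.

Lemma groupsP M g : g \in groups M ->
  exists2 p0, p0 \in M & g = [fset q in M | ps q == ps p0].
Proof. by case/imfsetP => _ /imfsetP[p0 /= M_p0 ->] ->; exists p0. Qed.

Lemma CG_char n M1 M2 x p : x \in CG n M1 M2 -> p \in x.1 ->
  x = ([fset q in M1 | ps q == ps p], [fset q in M2 | ps q == ps p]).
Proof.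
case: x => g1 g2; rewrite !inE /= => /andP[/andP[g1G g2G] /asboolP g_cmp] g1p.
have [p1 _ def_g1] := groupsP g1G; have [p2 M2p2 def_g2] := groupsP g2G.
have g2p2 : p2 \in g2 by rewrite def_g2 !inE M2p2 eqxx.
have [ps_p _] := g_cmp p p2 g1p g2p2.
move: g1p; rewrite def_g1 !inE => /andP[_ /eqP ps_p1].
by rewrite def_g2 -ps_p1 ps_p.
Qed.

Lemma CG_fst_sub n M1 M2 x p : x \in CG n M1 M2 -> p \in x.1 -> p \in M1.
Proof. by move=> xCG x1p; move: (x1p); rewrite (CG_char xCG x1p) !inE => /andP[]. Qed.

Lemma CG_fst_disjoint n M1 M2 :
  {in CG n M1 M2 &, forall x y p, p \in x.1 -> p \in y.1 -> x = y}.
Proof. by move=> x y xCG yCG p x1p y1p; rewrite (CG_char xCG x1p) (CG_char yCG y1p). Qed.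

End MatchingSets.

Theorem theorem3 (C A S : choiceType) (L1 L2 : {fset proc C A S})
  (bk : seq A) (n : nat) (f : proc C A S -> proc C A S) :
  simple_log L1 -> simple_log L2 -> 0 < n ->
  linker n L1 L2 f ->
  let M1 := ms L1 n bk in
  let M2 := ms L2 n bk in
  Fbound n M1 M2 <= #|` [fset p in M1 | f p \notin M2]| /\
  (forall x, x \in CG n M1 M2 ->
     #|` x.1| - minn #|` x.1| #|` x.2| <= #|` [fset p in x.1 | f p \notin M2]|).
Proof.
move=> _ _ _ f_link M1 M2.
have [_ f_inj _] := f_link.
have M1_L1 p : p \in M1 -> p \in L1 := @ms_sub _ _ _ L1 n bk p.
clearbody M1 M2.
have per_pair x : x \in CG n M1 M2 ->
    #|` x.1| - minn #|` x.1| #|` x.2| <= #|` [fset p in x.1 | f p \notin M2]|.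
  move=> xCG; have x1_L1 p : p \in x.1 -> p \in L1 by move/(CG_fst_sub xCG)/M1_L1.
  apply: loss_bound => [p q /x1_L1 p_L1 /x1_L1 | p x1p fpM2]; first exact: f_inj.
  by rewrite (CG_char xCG x1p) !inE fpM2 (linker_ps f_link (x1_L1 _ x1p)) /=.
split=> //; set lost := [fset p in M1 | f p \notin M2].
have lost_in x : x \in CG n M1 M2 ->
    [fset p in x.1 | f p \notin M2] = [fset p in lost | p \in x.1].
  move=> xCG; apply/fsetP => p; rewrite !inE.
  apply/andP/andP => [[x1p fp] | [/andP[_ fp] x1p]]; split=> //.
  by rewrite (CG_fst_sub xCG x1p).
apply: leq_trans (sum_card_disjoint lost (@CG_fst_disjoint _ _ _ n M1 M2)).
rewrite /Fbound big_seq [X in _ <= X]big_seq; apply: leq_sum => x xCG.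
by rewrite -lost_in //; apply: per_pair.
Qed.
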